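(* Consider $v$ CRs whose per-segment sub-Nyquist sample numbers $M_1,\dots,M_v$ are distinct consecutive primes with $M_iM_j>N$ for all $i\ne j$, and suppose the Nyquist spectrum is $s$-sparse (at most $s$ occupied bins, forming the support $\Omega\subseteq\{0,\dots,N-1\}$). Fix a bin $k$ and threshold $\lambda_k>0$, and use the decision rule: declare $\mathcal H_{1,k}$ iff $\widehat{E_s}[k]>\lambda_k$. Assume the following model for the test statistic: under $\mathcal H_{0,k}$ (bin $k$ unoccupied), $\widehat{E_s}[k]\sim\chi^2_{2Jv}\big(\tfrac{2}{N}\sum_{i\in\Upsilon_k}M_i\gamma_i[k]\big)$, and under $\mathcal H_{1,k}$ (bin $k$ occupied), $\widehat{E_s}[k]\sim\chi^2_{2Jv}(\mu)$ for some $\mu\ge \tfrac{2}{N}\sum_{i=1}^{v}M_i\gamma_i[k]$. Then $|\Upsilon_k|\le s$, and for any set $\Upsilon\supseteq \Upsilon_k$ of $s$ CRs, the probability of false alarm $P_{f,k}=\Pr(\widehat{E_s}[k]>\lambda_k\mid\mathcal H_{0,k})$ and probability of detection $P_{d,k}=\Pr(\widehat{E_s}[k]>\lambda_k\mid\mathcal H_{1,k})$ satisfy $$\frac{\Gamma(Jv,\lambda_k/2)}{\Gamma(Jv)}\le P_{f,k}\le Q_{Jv}\Big(\sqrt{\tfrac{2}{N}\textstyle\sum_{i\in\Upsilon}M_i\gamma_i[k]},\sqrt{\lambda_k}\Big),\qquad P_{d,k}\ge Q_{Jv}\Big(\sqrt{\tfrac{2}{N}\textstyle\sum_{i=1}^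{v}M_i\gamma_i[k]},\sqrt{\lambda_k}\Big).$$
   Context: Multi-rate sub-Nyquist spectrum sensing: $v$ CRs observe a signal over time $T$; Nyquist sampling would give $JN$ samples split into $J$ segments of $N$ samples. CR $i$ samples at a sub-Nyquist rate giving $JM_i$ samples, split into $J$ segments of $M_i$ samples; $Y_{i,j}[m]$ ($m=0,\dots,M_i-1$) is the DFT of segment $j$ at CR $i$, $E_{s,i}[m]=\sum_{j=1}^J|Y_{i,j}[m]|^2$, and the fusion-center test statistic is $\widehat{E_s}[k]=\sum_{i=1}^v \frac{N}{M_i}E_{s,i}[k \bmod M_i]$, $k=0,\dots,N-1$. $\gamma_i[k]\ge0$ denotes the SNR at CR $i$ associated with bin $k$ (for an unoccupied bin, the SNR of the occupied component aliased onto it). $\Upsilon_k$ is the set of CRs $i$ for which $k$ is an aliased frequency, i.e. $k\notin\Omega$ and $k\equiv k'\pmod{M_i}$ for some $k'\in\Omega$. $\chi^2_{d}(\mu)$ is the noncentral chi-square distribution with $d$ degrees of freedom and noncentrality parameter $\mu$ ($\chi^2_d(0)$ central). $\Gamma(a)$ is the gamma function, $\Gamma(a,x)$ the upper incomplete gamma function, and $Q_u(a,x)=\frac{1}{a^{u-1}}\int_x^\infty t^u e^{-(a^2+t^2)/2}I_{u-1}(at)\,dt$ the generalized Marcum Q-function, $I_\nu$ the modified Bessel function of the first kind. *)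

From Stdlib Require Import Reals Lra Lia Arith List ZArith Znumtheory.
From Stdlib Require Import Classical ClassicalEpsilon.
Import ListNotations.
Open Scope R_scope.

Definition improper_int (g : R -> R) (a l : R) : Prop :=
  (forall b, a <= b -> inhabited (Riemann_integrable g a b)) /\
  (forall eps, 0 < eps -> exists B, forall b (pr : Riemann_integrable g a b),
      B <= b -> Rabs (RiemannInt pr - l) < eps).

Definition ImpInt (g : R -> R) (a : R) : R :=
  epsilon (inhabits 0) (fun l => improper_int g a l).

Definition series_value (f : nat -> R) : R :=
  epsilon (inhabits 0) (fun l => infinite_sum f l).

Definition besselI (n : nat) (z : R) : R :=
  series_value (fun k => (z / 2) ^ (2 * k + n) / (INR (fact k) * INR (fact (k + n)))).

Definition upper_gamma (a : nat) (x : R) : R :=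
  ImpInt (fun t => t ^ (a - 1) * exp (- t)) x.
Definition Gamma_fn (a : nat) : R := upper_gamma a 0.

(** Generalized Marcum Q-function Q_u(a,x) (paper's integral formula for a > 0;
    for a = 0 its limiting value Gamma(u, x^2/2)/Gamma(u)). *)
Definition marcumQ (u : nat) (a x : R) : R :=
  if Rlt_dec 0 a then
    / a ^ (u - 1) *
    ImpInt (fun t => t ^ u * exp (- (a ^ 2 + t ^ 2) / 2) * besselI (u - 1) (a * t)) x
  else upper_gamma u (x ^ 2 / 2) / Gamma_fn u.

(** Density of the noncentral chi-square distribution chi^2_{2m}(mu)
    (2m degrees of freedom, noncentrality mu >= 0). *)
Definition chi2_pdf (m : nat) (mu x : R) : R :=
  if Rle_dec x 0 then 0 else
  if Rlt_dec 0 mu then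
    / 2 * exp (- (x + mu) / 2) * (sqrt (x / mu)) ^ (m - 1) * besselI (m - 1) (sqrt (mu * x))
  else x ^ (m - 1) * exp (- x / 2) / (2 ^ m * INR (fact (m - 1))).

Definition chi2_tail (m : nat) (mu lam : R) : R := ImpInt (chi2_pdf m mu) lam.

Definition sumR (f : nat -> R) (l : list nat) : R :=
  fold_right (fun i acc => f i + acc) 0 l.

(** CRs are indexed 0..v-1.  Upsilon_k = CRs i for which k is an aliased
    frequency: k notin Omega and k = k' mod M_i for some k' in Omega. *)
Definition Upsilon (v : nat) (M : nat -> nat) (Omega : list nat) (k : nat) : list nat :=
  filter (fun i => negb (existsb (Nat.eqb k) Omega) &&
                   existsb (fun k' => Nat.eqb (k mod M i) (k' mod M i)) Omega)%bool
         (seq 0 v).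

Definition consecutive_primes (v : nat) (M : nat -> nat) : Prop :=
  (forall i, (i < v)%nat -> prime (Z.of_nat (M i))) /\
  (forall i, (i + 1 < v)%nat ->
     (M i < M (i + 1))%nat /\
     forall p, (M i < p < M (i + 1))%nat -> ~ prime (Z.of_nat p)).

(** With the Poisson probabilities p_n(y) = e^{-y} y^n / n!
    and distribution functions P_n(y) = p_0(y) + ... + p_{n-1}(y), the tail
    of the noncentral chi-square law with 2(m+1) degrees of freedom is the
    Poisson mixture
        Pr(chi^2_{2(m+1)}(mu) > x) = sum_j p_j(mu/2) P_{m+j+1}(x/2).    ( * )
    We prove ( * ) by integrating the density term by term: the density is
    the same mixture of the central densities p_n(x/2)/2, whose primitives are
    -P_{n+1}(x/2).  The Marcum function Q_{m+1}(sqrt mu, sqrt x) reduces to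
    the same series after the substitution x = t^2, and for mu = 0 so does the
    regularized upper incomplete gamma function Gamma(m+1, x/2)/Gamma(m+1).
    The convolution identity of Poisson laws shows that ( * ) is nondecreasing
    in mu, so all three inequalities of the theorem reduce to comparisons of
    noncentrality parameters.

    The M_i are distinct primes with M_i M_j > N, so by
    the Chinese remainder theorem two different CRs cannot fold the bin k onto
    the same occupied bin: |Upsilon_k| <= |Omega| <= s. *)

From Stdlib Require Import Reals Lra Lia Arith List ZArith Znumtheory ClassicalEpsilon.
From Coquelicot Require Import Coquelicot.
Open Scope R_scope.

(** Coquelicot states equalities in the carrier of a normed module; [Req]
    restates the goal as an equality in R so that [ring]/[field] apply. *)
Ltac Req := match goal with |- ?a = ?b => change (@eq R a b) end.

Lemma partial_sum_le_series (a : nat -> R) (l : R) (n : nat) :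
  (forall k, 0 <= a k) -> is_series a l -> sum_n a n <= l.
Proof.
  intros Ha Hl. apply (is_lim_seq_incr_compare (sum_n a)); [exact Hl|].
  intro k. rewrite sum_Sn. specialize (Ha (S k)). change (plus ?x ?y) with (x + y). lra.
Qed.

Lemma is_series_first_term (a : nat -> R) :
  (forall j, a (S j) = 0) -> is_series a (a 0%nat).
Proof.
  intro H. change (is_lim_seq (sum_n a) (a 0%nat)).
  apply (is_lim_seq_ext (fun _ => a 0%nat)); [|apply is_lim_seq_const].
  induction n; [now rewrite sum_O|].
  rewrite sum_Sn, <- IHn, H. change (a 0%nat = a 0%nat + 0). ring.
Qed.

Lemma series_value_eq (f : nat -> R) (l : R) : is_series f l -> series_value f = l.
Proof.
  intro H. apply is_series_Reals in H. unfold series_value.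
  eapply uniqueness_sum; [|exact H].
  exact (epsilon_spec (inhabits 0) (fun l => infinite_sum f l) (ex_intro _ l H)).
Qed.

Lemma series_tail_bound (c w : nat -> R) (C H K : R) (n : nat) :
  (forall j, 0 <= c j) -> (forall j, Rabs (w j) <= K) ->
  is_series c C -> is_series (fun j => c j * w j) H ->
  Rabs (H - sum_n (fun j => c j * w j) n) <= K * (C - sum_n c n).
Proof.
  intros Hc Hw HC HH.
  assert (tail : forall (a : nat -> R) l, is_series a l ->
            is_series (fun k => a (S n + k)%nat) (l - sum_n a n)).
  { intros a l Ha. apply is_series_incr_n; [lia|].
    replace (plus _ _) with l; [exact Ha|]. simpl pred.
    change (plus ?x ?y) with (x + y). rewrite !sum_n_Reals. lra. }
  set (t := fun k => c (S n + k)%nat * w (S n + k)%nat).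
  assert (Hbound : forall k, 0 <= Rabs (t k) <= K * c (S n + k)%nat).
  { intro k. unfold t. rewrite Rabs_mult, (Rabs_pos_eq (c _)) by apply Hc.
    pose proof (Hc (S n + k)%nat). pose proof (Hw (S n + k)%nat).
    pose proof (Rabs_pos (w (S n + k)%nat)). split; nra. }
  assert (Hdom : is_series (fun k => K * c (S n + k)%nat) (K * (C - sum_n c n)))
    by exact (is_series_scal K _ _ (tail c C HC)).
  rewrite <- (is_series_unique _ _ (tail _ _ HH)), <- (is_series_unique _ _ Hdom).
  eapply Rle_trans; [apply Series_Rabs|apply Series_le; [exact Hbound|eexists; exact Hdom]].
  apply (ex_series_le (V := R_CompleteNormedModule) _ (fun k => K * c (S n + k)%nat));
    [|eexists; exact Hdom].
  intro k. change (norm ?x) with (Rabs x). rewrite Rabs_Rabsolu. apply Hbound.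
Qed.

Definition clamp (a b x : R) : R := Rmax a (Rmin b x).

Lemma clamp_in (a b x : R) : a <= b -> a <= clamp a b x <= b.
Proof. intro H. unfold clamp. split; [apply Rmax_l|]. apply Rmax_lub; [exact H|apply Rmin_l]. Qed.

Lemma clamp_id (a b x : R) : a <= x <= b -> clamp a b x = x.
Proof. intro H. unfold clamp. rewrite Rmin_right, Rmax_right; lra. Qed.

Lemma is_RInt_partial_sum (c : nat -> R) (u U : nat -> R -> R) (a b : R) (n : nat) :
  a <= b ->
  (forall j x, a <= x <= b -> is_derive (U j) x (u j x)) ->
  (forall j x, a <= x <= b -> continuous (u j) x) ->
  is_RInt (fun x => sum_n (fun j => c j * u j x) n) a b
          (sum_n (fun j => c j * (U j b - U j a)) n).
Proof.
  intros Hab HD HC.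
  assert (Hj : forall j, is_RInt (fun x => c j * u j x) a b (c j * (U j b - U j a))).
  { intro j. apply (is_RInt_scal (u j) a b (c j) (U j b - U j a)).
    apply (is_RInt_derive (U j) (u j)); rewrite Rmin_left, Rmax_right by lra;
      intros; auto. }
  induction n.
  - rewrite sum_O. apply (is_RInt_ext (fun x => c 0%nat * u 0%nat x)); [|apply Hj].
    intros x _. now rewrite sum_O.
  - rewrite sum_Sn.
    apply (is_RInt_ext (fun x => plus (sum_n (fun j => c j * u j x) n) (c (S n) * u (S n) x)));
      [intros x _; now rewrite sum_Sn|].
    apply (is_RInt_plus (V := R_NormedModule)); [exact IHn|apply Hj].
Qed.

(** The partial sums converge
    uniformly by [series_tail_bound], so [filterlim_RInt] applies. *)
Lemma is_RInt_series (c : nat -> R) (u U : nat -> R -> R) (h : R -> R) (a b K C I : R) :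
  a <= b -> (forall j, 0 <= c j) -> is_series c C ->
  (forall j x, a <= x <= b -> is_derive (U j) x (u j x)) ->
  (forall j x, a <= x <= b -> continuous (u j) x) ->
  (forall j x, a <= x <= b -> Rabs (u j x) <= K) ->
  (forall x, a <= x <= b -> is_series (fun j => c j * u j x) (h x)) ->
  is_series (fun j => c j * (U j b - U j a)) I ->
  is_RInt h a b I.
Proof.
  intros Hab Hc HC HD Hcont Hbnd Hh HI.
  set (f := fun n x => sum_n (fun j => c j * u j (clamp a b x)) n).
  set (g := fun x => h (clamp a b x)).
  assert (Hf : forall n, is_RInt (f n) a b (sum_n (fun j => c j * (U j b - U j a)) n)).
  { intro n. apply (is_RInt_ext (fun x => sum_n (fun j => c j * u j x) n));
      [|now apply is_RInt_partial_sum].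
    intros x Hx. rewrite Rmin_left, Rmax_right in Hx by lra.
    unfold f. now rewrite clamp_id by lra. }
  assert (Hunif : filterlim f Hierarchy.eventually
                    (locally (g : fct_UniformSpace R R_UniformSpace))).
  { apply (proj2 (filterlim_locally (F := Hierarchy.eventually)
                    (f : nat -> fct_UniformSpace R R_UniformSpace) g)).
    intro eps.
    assert (Hrem : is_lim_seq (fun n => K * (C - sum_n c n)) 0).
    { replace (Finite 0) with (Rbar_mult K (C - C)) by (simpl; f_equal; ring).
      apply is_lim_seq_scal_l, is_lim_seq_minus'; [apply is_lim_seq_const|exact HC]. }
    destruct (Hrem (ball 0 eps)) as [N HN]; [now exists eps|].
    exists N. intros n Hn t. specialize (HN n Hn).
    change (Rabs (f n t - g t) < eps). change (Rabs (K * (C - sum_n c n) - 0) < eps) in HN.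
    rewrite Rminus_0_r in HN. rewrite Rabs_minus_sym.
    assert (Ht := clamp_in a b t Hab).
    eapply Rle_lt_trans; [|eapply Rle_lt_trans; [apply Rle_abs|exact HN]].
    exact (series_tail_bound c (fun j => u j (clamp a b t)) C (g t) K n Hc
             (fun j => Hbnd j _ Ht) HC (Hh _ Ht)). }
  destruct (filterlim_RInt f a b Hierarchy.eventually eventually_filter g _ Hf Hunif)
    as [I' [HI' Hg]].
  replace I with I'.
  - apply (is_RInt_ext g); [|exact Hg].
    intros x Hx. rewrite Rmin_left, Rmax_right in Hx by lra. unfold g. now rewrite clamp_id by lra.
  - rewrite <- (is_series_unique _ _ HI). symmetry. now apply is_series_unique.
Qed.

Lemma improper_int_unique (g : R -> R) (a l1 l2 : R) :
  improper_int g a l1 -> improper_int g a l2 -> l1 = l2.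
Proof.
  intros [Hint H1] [_ H2]. apply Rminus_diag_uniq, Rabs_eq_0.
  apply Rle_antisym; [|apply Rabs_pos]. apply le_epsilon. intros eps Heps.
  destruct (H1 (eps / 2)) as [B1 HB1]; [lra|]. destruct (H2 (eps / 2)) as [B2 HB2]; [lra|].
  set (b := Rmax a (Rmax B1 B2)).
  destruct (Hint b (Rmax_l _ _)) as [pr].
  specialize (HB1 b pr (Rle_trans _ _ _ (Rmax_l _ _) (Rmax_r a _))).
  specialize (HB2 b pr (Rle_trans _ _ _ (Rmax_r _ _) (Rmax_r a _))).
  replace (l1 - l2) with (- (RiemannInt pr - l1) + (RiemannInt pr - l2)) by ring.
  eapply Rle_trans; [apply Rabs_triang|]. rewrite Rabs_Ropp. lra.
Qed.

Lemma ImpInt_eq (g : R -> R) (a l : R) : improper_int g a l -> ImpInt g a = l.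
Proof.
  intro H. apply (improper_int_unique g a); [|exact H].
  exact (epsilon_spec (inhabits 0) (fun l => improper_int g a l) (ex_intro _ l H)).
Qed.

Definition vanishes_at_infinity (F : R -> R) : Prop :=
  forall eps, 0 < eps -> exists B, forall x, B <= x -> Rabs (F x) < eps.

Lemma ImpInt_primitive (g F : R -> R) (a : R) :
  (forall b, a <= b -> is_RInt g a b (F a - F b)) -> vanishes_at_infinity F ->
  ImpInt g a = F a.
Proof.
  intros HI HF. apply ImpInt_eq. split.
  - intros b Hb. constructor. apply ex_RInt_Reals_0. eexists. now apply HI.
  - intros eps Heps. destruct (HF eps Heps) as [B HB]. exists (Rmax B a).
    intros b pr Hb.
    rewrite <- RInt_Reals, (is_RInt_unique _ _ _ _ (HI b (Rle_trans _ _ _ (Rmax_r _ _) Hb))).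
    replace (F a - F b - F a) with (- F b) by ring. rewrite Rabs_Ropp.
    apply HB. exact (Rle_trans _ _ _ (Rmax_l _ _) Hb).
Qed.

Lemma vanishes_scal (c : R) (F : R -> R) :
  vanishes_at_infinity F -> vanishes_at_infinity (fun x => c * F x).
Proof.
  intros HF eps Heps. destruct (HF (eps / (Rabs c + 1))) as [B HB].
  { apply Rdiv_lt_0_compat; [lra|pose proof (Rabs_pos c); lra]. }
  exists B. intros x Hx. specialize (HB x Hx). rewrite Rabs_mult.
  pose proof (Rabs_pos c). pose proof (Rabs_pos (F x)).
  replace eps with (eps / (Rabs c + 1) * (Rabs c + 1)) by (field; lra). nra.
Qed.

Lemma vanishes_comp (F g : R -> R) :
  vanishes_at_infinity F -> (forall B, exists C, forall x, C <= x -> B <= g x) ->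
  vanishes_at_infinity (fun x => F (g x)).
Proof.
  intros HF Hg eps Heps. destruct (HF eps Heps) as [B HB]. destruct (Hg B) as [C HC].
  exists C. intros x Hx. apply HB, HC, Hx.
Qed.

Definition poisson (n : nat) (y : R) : R := exp (- y) * y ^ n / INR (fact n).

Fixpoint poisson_cdf (n : nat) (y : R) : R :=
  match n with
  | O => 0
  | S n => poisson_cdf n y + poisson n y
  end.

Lemma poisson_ge0 (n : nat) (y : R) : 0 <= y -> 0 <= poisson n y.
Proof.
  intro Hy. unfold poisson. apply Rmult_le_pos; [apply Rmult_le_pos|].
  - left; apply exp_pos.
  - now apply pow_le.
  - left; apply Rinv_0_lt_compat, INR_fact_lt_0.
Qed.

Lemma poisson_series (y : R) : is_series (fun n => poisson n y) 1.
Proof.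
  assert (Hexp : is_series (fun n => / INR (fact n) * y ^ n) (exp y)).
  { apply is_series_Reals. exact (proj2_sig (exist_exp y)). }
  replace 1 with (exp (- y) * exp y) by (rewrite <- exp_plus, Rplus_opp_l; apply exp_0).
  apply (is_series_ext (fun n => scal (exp (- y)) (/ INR (fact n) * y ^ n))).
  - intro n. unfold poisson. change (scal ?a ?b) with (a * b). Req.
    field. apply not_0_INR, fact_neq_0.
  - exact (is_series_scal _ _ _ Hexp).
Qed.

Lemma poisson_cdf_partial_sum (n : nat) (y : R) :
  poisson_cdf (S n) y = sum_n (fun i => poisson i y) n.
Proof.
  induction n.
  - rewrite sum_O. simpl. ring.
  - rewrite sum_Sn, <- IHn. reflexivity.
Qed.

Lemma poisson_cdf_ge0 (n : nat) (y : R) : 0 <= y -> 0 <= poisson_cdf n y.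
Proof. intro Hy. induction n; simpl; [lra|]. pose proof (poisson_ge0 n y Hy). lra. Qed.

Lemma poisson_cdf_le1 (n : nat) (y : R) : 0 <= y -> poisson_cdf n y <= 1.
Proof.
  intro Hy. destruct n; [simpl; lra|]. rewrite poisson_cdf_partial_sum.
  apply partial_sum_le_series; [intro; now apply poisson_ge0|apply poisson_series].
Qed.

Lemma poisson_le1 (n : nat) (y : R) : 0 <= y -> poisson n y <= 1.
Proof.
  intro Hy. pose proof (poisson_cdf_le1 (S n) y Hy). pose proof (poisson_cdf_ge0 n y Hy).
  simpl in *. lra.
Qed.

Lemma poisson_cdf_mono (n k : nat) (y : R) :
  0 <= y -> poisson_cdf n y <= poisson_cdf (n + k) y.
Proof.
  intro Hy. induction k; [rewrite Nat.add_0_r; lra|].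
  rewrite Nat.add_succ_r. simpl. pose proof (poisson_ge0 (n + k) y Hy). lra.
Qed.

(** Quantitative decay: y P_n(y) <= n^2, since y p_i(y) = (i+1) p_{i+1}(y) <= i+1. *)
Lemma poisson_cdf_decay (n : nat) (y : R) : 0 <= y -> y * poisson_cdf n y <= INR n * INR n.
Proof.
  intro Hy. induction n; [simpl; lra|]. cbn [poisson_cdf].
  assert (Hshift : y * poisson n y = INR (S n) * poisson (S n) y).
  { unfold poisson. rewrite fact_simpl, mult_INR. simpl pow. field.
    split; [apply not_0_INR, fact_neq_0|apply not_0_INR; lia]. }
  pose proof (poisson_le1 (S n) y Hy). pose proof (poisson_ge0 (S n) y Hy).
  pose proof (pos_INR n). rewrite S_INR in *. nra.
Qed.

Lemma poisson_cdf_vanishes (n : nat) : vanishes_at_infinity (poisson_cdf n).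
Proof.
  intros eps Heps. exists (INR n * INR n / eps + 1). intros y Hy.
  assert (Hq : 0 <= INR n * INR n / eps)
    by (apply Rdiv_le_0_compat; [apply Rle_0_sqr|exact Heps]).
  assert (Hy0 : 0 <= y) by lra.
  pose proof (poisson_cdf_decay n y Hy0). pose proof (poisson_cdf_ge0 n y Hy0).
  rewrite Rabs_pos_eq by lra.
  assert (Hlt : INR n * INR n < y * eps).
  { replace (INR n * INR n) with (INR n * INR n / eps * eps) by (field; lra). nra. }
  nra.
Qed.

Lemma poisson_at_0 (j : nat) : poisson j 0 = if (j =? 0)%nat then 1 else 0.
Proof.
  unfold poisson. rewrite Ropp_0, exp_0. destruct j; simpl; [field|].
  unfold Rdiv. ring.
Qed.

Lemma poisson_cdf_at_0 (n : nat) : poisson_cdf (S n) 0 = 1.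
Proof.
  induction n; cbn [poisson_cdf] in *.
  - rewrite poisson_at_0. simpl. ring.
  - rewrite IHn, poisson_at_0. simpl. ring.
Qed.

Lemma poisson_derive (n : nat) (y : R) :
  is_derive (poisson n) y (match n with O => 0 | S n' => poisson n' y end - poisson n y).
Proof.
  unfold poisson. destruct n; auto_derive; auto.
  - simpl. field.
  - change (match n with 0%nat => 1 | S _ => INR n + 1 end) with (INR (S n)).
    change (fact n + n * fact n)%nat with (fact (S n)).
    rewrite fact_simpl, mult_INR. simpl pow. field.
    split; [apply not_0_INR, fact_neq_0|apply not_0_INR; lia].
Qed.

Lemma poisson_cdf_derive (n : nat) (y : R) : is_derive (poisson_cdf (S n)) y (- poisson n y).
Proof.
  induction n.
  - apply (is_derive_ext (poisson 0)); [intro t; simpl; ring|].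
    replace (- poisson 0 y) with (0 - poisson 0 y) by ring. apply poisson_derive.
  - replace (- poisson (S n) y) with (- poisson n y + (poisson n y - poisson (S n) y)) by ring.
    apply (is_derive_plus (poisson_cdf (S n)) (poisson (S n))); [exact IHn|apply poisson_derive].
Qed.

Lemma poisson_convolution (y z : R) (n : nat) :
  sum_f_R0 (fun k => poisson k y * poisson (n - k) z) n = poisson n (y + z).
Proof.
  set (E := exp (- (y + z)) / INR (fact n)).
  rewrite (sum_eq _ (fun k => Binomial.C n k * y ^ k * z ^ (n - k) * E)).
  - rewrite <- scal_sum, <- binomial. unfold poisson, E. field. apply not_0_INR, fact_neq_0.
  - intros k Hk. unfold poisson, E, Binomial.C.
    replace (- (y + z)) with (- y + - z) by ring. rewrite exp_plus.
    field. repeat split; apply not_0_INR, fact_neq_0.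
Qed.

Lemma poisson_mixture_ex (y : R) (f : nat -> R) :
  0 <= y -> (forall j, Rabs (f j) <= 1) -> ex_series (fun j => poisson j y * f j).
Proof.
  intros Hy Hf. apply (ex_series_le (V := R_CompleteNormedModule) _ (fun j => poisson j y));
    [|exists 1; apply poisson_series].
  intro j. change (norm ?x) with (Rabs x).
  rewrite Rabs_mult, Rabs_pos_eq by now apply poisson_ge0.
  pose proof (poisson_ge0 j y Hy). specialize (Hf j). nra.
Qed.

(** Density and tail function of the central chi-square law with 2(n+1)
    degrees of freedom: f_n(x) = p_n(x/2)/2 and T_n(x) = P_{n+1}(x/2). *)
Definition central_pdf (n : nat) (x : R) : R := / 2 * poisson n (x / 2).
Definition central_tail (n : nat) (x : R) : R := poisson_cdf (S n) (x / 2).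

Lemma central_pdf_bounds (n : nat) (x : R) : 0 <= x -> 0 <= central_pdf n x <= / 2.
Proof.
  intro Hx. unfold central_pdf.
  pose proof (poisson_ge0 n (x / 2)). pose proof (poisson_le1 n (x / 2)). split; nra.
Qed.

Lemma central_pdf_continuous (n : nat) (x : R) : continuous (central_pdf n) x.
Proof.
  apply (ex_derive_continuous (V := R_NormedModule)). unfold central_pdf, poisson.
  auto_derive. auto.
Qed.

Lemma central_tail_derive (n : nat) (x : R) :
  is_derive (central_tail n) x (- central_pdf n x).
Proof.
  unfold central_tail, central_pdf.
  replace (- (/ 2 * poisson n (x / 2))) with (scal (/ 2) (- poisson n (x / 2)))
    by (change (scal ?a ?b) with (a * b); Req; ring).
  apply (is_derive_comp (poisson_cdf (S n)) (fun t => t / 2)); [apply poisson_cdf_derive|].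
  auto_derive; auto. Req. field.
Qed.

Lemma neg_central_tail_derive (n : nat) (x : R) :
  is_derive (fun t => - central_tail n t) x (central_pdf n x).
Proof.
  replace (central_pdf n x) with (opp (- central_pdf n x))
    by (change (opp ?a) with (- a); Req; ring).
  apply (is_derive_opp (central_tail n)), central_tail_derive.
Qed.

Lemma central_tail_bounds (n : nat) (x : R) : 0 <= x -> 0 <= central_tail n x <= 1.
Proof.
  intro Hx. unfold central_tail.
  split; [apply poisson_cdf_ge0|apply poisson_cdf_le1]; lra.
Qed.

Lemma central_tail_mono (n k : nat) (x : R) :
  0 <= x -> central_tail n x <= central_tail (n + k) x.
Proof. intro Hx. unfold central_tail. apply (poisson_cdf_mono (S n) k). lra. Qed.

Lemma central_tail_vanishes (n : nat) : vanishes_at_infinity (central_tail n).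
Proof.
  apply (vanishes_comp (poisson_cdf (S n)) (fun x => x / 2)); [apply poisson_cdf_vanishes|].
  intro B. exists (2 * B). intros x Hx. lra.
Qed.

(** Poisson-mixture representation of the noncentral chi-square tail with
    2(m+1) degrees of freedom and noncentrality mu:
      T(m, mu, x) = sum_j p_j(mu/2) T_{m+j}(x). *)
Definition nc_tail_term (m : nat) (mu x : R) (j : nat) : R :=
  poisson j (mu / 2) * central_tail (m + j) x.
Definition nc_tail (m : nat) (mu x : R) : R := Series (nc_tail_term m mu x).

(** The mixture is dominated by the Poisson weights, hence converges to a
    nonnegative value. *)
Lemma nc_tail_term_bounds (m : nat) (mu x : R) (j : nat) :
  0 <= mu -> 0 <= x -> 0 <= nc_tail_term m mu x j <= poisson j (mu / 2).
Proof.
  intros Hmu Hx. unfold nc_tail_term. pose proof (poisson_ge0 j (mu / 2)).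
  pose proof (central_tail_bounds (m + j) x Hx). split; nra.
Qed.

Lemma nc_tail_correct (m : nat) (mu x : R) :
  0 <= mu -> 0 <= x -> is_series (nc_tail_term m mu x) (nc_tail m mu x).
Proof.
  intros Hmu Hx. apply Series_correct, poisson_mixture_ex; [lra|].
  intro j. pose proof (central_tail_bounds (m + j) x Hx). rewrite Rabs_pos_eq; lra.
Qed.

Lemma nc_tail_ge0 (m : nat) (mu x : R) : 0 <= mu -> 0 <= x -> 0 <= nc_tail m mu x.
Proof.
  intros Hmu Hx. eapply Rle_trans; [|apply (partial_sum_le_series (nc_tail_term m mu x) _ 0)].
  - rewrite sum_O. apply nc_tail_term_bounds; lra.
  - intro j. apply nc_tail_term_bounds; lra.
  - now apply nc_tail_correct.
Qed.

(** With no noncentrality only the j = 0 term survives. *)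
Lemma nc_tail_central (m : nat) (x : R) : 0 <= x -> nc_tail m 0 x = central_tail m x.
Proof.
  intro Hx. unfold nc_tail. apply is_series_unique.
  replace (central_tail m x) with (nc_tail_term m 0 x 0).
  - apply is_series_first_term. intro j. unfold nc_tail_term.
    replace (0 / 2) with 0 by field. rewrite poisson_at_0. simpl. ring.
  - unfold nc_tail_term. replace (0 / 2) with 0 by field.
    rewrite poisson_at_0, Nat.add_0_r. simpl. ring.
Qed.

(** Splitting the mixture after its n-th term: the head is at most T_{m+n}(x)
    because T is nondecreasing in its index, the rest at most the Poisson tail. *)
Lemma nc_tail_split_bound (m n : nat) (mu x : R) : 0 <= mu -> 0 <= x ->
  nc_tail m mu x <= central_tail (m + n) x + (1 - sum_n (fun j => poisson j (mu / 2)) n).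
Proof.
  intros Hmu Hx. set (p := fun j => poisson j (mu / 2)).
  assert (Hp0 : forall j, 0 <= p j) by (intro; apply poisson_ge0; lra).
  assert (Hp : is_series p 1) by apply poisson_series.
  unfold nc_tail.
  rewrite (Series_incr_n _ (S n)) by (lia || eexists; apply (nc_tail_correct m mu x Hmu Hx)).
  simpl pred. apply Rplus_le_compat.
  - apply Rle_trans with (sum_f_R0 (fun j => p j * central_tail (m + n) x) n).
    + apply sum_Rle. intros j Hj. apply Rmult_le_compat_l; [apply Hp0|].
      replace (m + n)%nat with (m + j + (n - j))%nat by lia. now apply central_tail_mono.
    + rewrite <- scal_sum.
      pose proof (partial_sum_le_series p 1 n Hp0 Hp) as Hsum. rewrite sum_n_Reals in Hsum.
      pose proof (central_tail_bounds (m + n) x Hx). nra.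
  - assert (Htail : is_series (fun k => p (S n + k)%nat) (1 - sum_n p n)).
    { apply is_series_incr_n; [lia|]. simpl pred. replace (plus _ _) with 1; [exact Hp|].
      change (plus ?a ?b) with (a + b). rewrite !sum_n_Reals. lra. }
    rewrite <- (is_series_unique _ _ Htail). apply Series_le; [|eexists; exact Htail].
    intro k. apply nc_tail_term_bounds; lra.
Qed.

(** The mixture tail vanishes at infinity: choose n so that the Poisson tail
    is small, then x so that T_{m+n}(x) is small ([nc_tail_split_bound]). *)
Lemma nc_tail_vanishes (m : nat) (mu : R) : 0 <= mu -> vanishes_at_infinity (nc_tail m mu).
Proof.
  intros Hmu eps Heps.
  assert (Hrem : is_lim_seq (fun n => 1 - sum_n (fun j => poisson j (mu / 2)) n) 0).
  { replace (Finite 0) with (Finite (1 - 1)) by (f_equal; ring).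
    apply is_lim_seq_minus'; [apply is_lim_seq_const|apply poisson_series]. }
  destruct (Hrem (ball 0 (mkposreal (eps / 2) ltac:(lra)))) as [n Hn];
    [now exists (mkposreal (eps / 2) ltac:(lra))|].
  specialize (Hn n (le_n n)).
  change (Rabs (1 - sum_n (fun j => poisson j (mu / 2)) n - 0) < eps / 2) in Hn.
  destruct (central_tail_vanishes (m + n) (eps / 2)) as [B HB]; [lra|].
  exists (Rmax B 0). intros x Hx.
  pose proof (Rmax_l B 0). pose proof (Rmax_r B 0).
  specialize (HB x ltac:(lra)).
  pose proof (nc_tail_split_bound m n mu x Hmu ltac:(lra)).
  pose proof (nc_tail_ge0 m mu x Hmu ltac:(lra)).
  rewrite Rabs_pos_eq in HB by (apply central_tail_bounds; lra).
  rewrite Rabs_pos_eq by lra. rewrite Rminus_0_r in Hn. apply Rabs_def2 in Hn. lra.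
Qed.

(** Writing mu2 = mu1 + d,
    the Cauchy product of the mixture for mu1 with the Poisson(d/2) weights
    still sums to T(m, mu1, x), and by [poisson_convolution] its n-th term is
    dominated by the n-th term of the mixture for mu2. *)
Lemma nc_tail_mono (m : nat) (mu1 mu2 x : R) :
  0 <= mu1 <= mu2 -> 0 <= x -> nc_tail m mu1 x <= nc_tail m mu2 x.
Proof.
  intros Hmu Hx. set (d := mu2 - mu1).
  assert (Hd : 0 <= d / 2) by (unfold d; lra).
  assert (Hprod := is_series_mult_pos (nc_tail_term m mu1 x) (fun j => poisson j (d / 2)) _ _
     (nc_tail_correct m mu1 x ltac:(lra) Hx) (poisson_series (d / 2))
     (fun j => proj1 (nc_tail_term_bounds m mu1 x j ltac:(lra) Hx))
     (fun j => poisson_ge0 j _ Hd)).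
  rewrite Rmult_1_r in Hprod. rewrite <- (is_series_unique _ _ Hprod).
  apply Series_le; [|eexists; apply nc_tail_correct; lra].
  intro n. split.
  - apply cond_pos_sum. intro k. pose proof (poisson_ge0 (n - k) _ Hd).
    pose proof (nc_tail_term_bounds m mu1 x k ltac:(lra) Hx). nra.
  - unfold nc_tail_term at 2.
    replace (mu2 / 2) with (mu1 / 2 + d / 2) by (unfold d; field).
    rewrite <- poisson_convolution, (Rmult_comm (sum_f_R0 _ n)), scal_sum.
    apply sum_Rle. intros k Hk. unfold nc_tail_term.
    pose proof (poisson_ge0 (n - k) _ Hd). pose proof (poisson_ge0 k (mu1 / 2) ltac:(lra)).
    assert (Hw : 0 <= poisson k (mu1 / 2) * poisson (n - k) (d / 2)) by nra.
    assert (Hkn : central_tail (m + k) x <= central_tail (m + n) x).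
    { replace (m + n)%nat with (m + k + (n - k))%nat by lia. now apply central_tail_mono. }
    nra.
Qed.

Lemma bessel_term_mixture (m k : nat) (mu x : R) : 0 < mu -> 0 < x ->
  / 2 * exp (- (x + mu) / 2) * sqrt (x / mu) ^ m *
    ((sqrt (mu * x) / 2) ^ (2 * k + m) / (INR (fact k) * INR (fact (k + m))))
  = poisson k (mu / 2) * central_pdf (m + k) x.
Proof.
  intros Hmu Hx.
  assert (Hz2 : (sqrt (mu * x) / 2) ^ 2 = mu / 2 * (x / 2)).
  { unfold Rdiv. rewrite Rpow_mult_distr, pow2_sqrt by nra. field. }
  assert (Hsz : sqrt (x / mu) * (sqrt (mu * x) / 2) = x / 2).
  { rewrite Rmult_comm. unfold Rdiv at 1. rewrite Rmult_assoc, (Rmult_comm (/ 2)), <- Rmult_assoc.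
    rewrite <- sqrt_mult by (apply Rdiv_le_0_compat || nra; lra).
    replace (mu * x * (x / mu)) with (x * x) by (field; lra). rewrite sqrt_square; lra. }
  assert (Hm : sqrt (x / mu) ^ m * (sqrt (mu * x) / 2) ^ m = (x / 2) ^ m)
    by now rewrite <- Rpow_mult_distr, Hsz.
  rewrite pow_add, pow_mult, Hz2, Rpow_mult_distr.
  replace (- (x + mu) / 2) with (- (mu / 2) + - (x / 2)) by field. rewrite exp_plus.
  unfold central_pdf, poisson. rewrite (Nat.add_comm k m), (pow_add (x / 2) m k).
  rewrite <- Hm. field.
  split; apply not_0_INR, fact_neq_0.
Qed.

Lemma chi2_pdf_mixture (m : nat) (mu x : R) : 0 <= mu -> 0 < x ->
  is_series (fun j => poisson j (mu / 2) * central_pdf (m + j) x) (chi2_pdf (S m) mu x).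
Proof.
  intros Hmu Hx. unfold chi2_pdf.
  destruct (Rle_dec x 0) as [Hx0|_]; [lra|]. replace (S m - 1)%nat with m by lia.
  destruct (Rlt_dec 0 mu) as [Hmu0|Hmu0].
  - set (mix := fun j => poisson j (mu / 2) * central_pdf (m + j) x).
    assert (Hmix : is_series mix (Series mix)).
    { apply Series_correct, poisson_mixture_ex; [lra|]. intro j.
      pose proof (central_pdf_bounds (m + j) x ltac:(lra)). rewrite Rabs_pos_eq; lra. }
    set (C := / 2 * exp (- (x + mu) / 2) * sqrt (x / mu) ^ m).
    assert (HC : 0 < C).
    { unfold C. apply Rmult_lt_0_compat; [apply Rmult_lt_0_compat; [lra|apply exp_pos]|].
      apply pow_lt, sqrt_lt_R0, Rdiv_lt_0_compat; lra. }
    assert (Hbessel : is_series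
      (fun k => (sqrt (mu * x) / 2) ^ (2 * k + m) / (INR (fact k) * INR (fact (k + m))))
      (/ C * Series mix)).
    { apply (is_series_ext (fun k => scal (/ C) (mix k))); [|exact (is_series_scal _ _ _ Hmix)].
      intro k. change (scal ?a ?b) with (a * b). unfold mix.
      rewrite <- bessel_term_mixture by lra. fold C. Req. field.
      repeat split; [apply not_0_INR, fact_neq_0|apply not_0_INR, fact_neq_0|lra]. }
    unfold besselI. rewrite (series_value_eq _ _ Hbessel). fold C.
    replace (C * (/ C * Series mix)) with (Series mix) by (field; lra). exact Hmix.
  - replace mu with 0 in * by lra.
    replace (x ^ m * exp (- x / 2) / (2 ^ S m * INR (fact m)))
      with (poisson 0 (0 / 2) * central_pdf (m + 0) x).
    + apply (is_series_first_term (fun j => poisson j (0 / 2) * central_pdf (m + j) x)).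
      intro j. replace (0 / 2) with 0 by field. rewrite poisson_at_0. simpl. ring.
    + replace (0 / 2) with 0 by field. rewrite poisson_at_0, Nat.add_0_r.
      unfold central_pdf, poisson. unfold Rdiv. rewrite Rpow_mult_distr, pow_inv.
      replace (- x * / 2) with (- (x * / 2)) by ring. simpl. field.
      split; [apply not_0_INR, fact_neq_0|apply pow_nonzero; lra].
Qed.

(** Integral of the noncentral density over [lam, b], integrating the Poisson
    mixture of [chi2_pdf_mixture] term by term. *)
Lemma chi2_pdf_RInt (m : nat) (mu lam b : R) : 0 <= mu -> 0 < lam -> lam <= b ->
  is_RInt (chi2_pdf (S m) mu) lam b (nc_tail m mu lam - nc_tail m mu b).
Proof.
  intros Hmu Hlam Hb.
  apply (is_RInt_series (fun j => poisson j (mu / 2)) (fun j => central_pdf (m + j))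
           (fun j x => - central_tail (m + j) x) _ lam b (/ 2) 1); try assumption.
  - intro j. apply poisson_ge0. lra.
  - apply poisson_series.
  - intros j x _. apply neg_central_tail_derive.
  - intros j x _. apply central_pdf_continuous.
  - intros j x Hx. pose proof (central_pdf_bounds (m + j) x ltac:(lra)).
    rewrite Rabs_pos_eq; lra.
  - intros x Hx. apply chi2_pdf_mixture; lra.
  - apply (is_series_ext (fun j => plus (nc_tail_term m mu lam j) (opp (nc_tail_term m mu b j)))).
    + intro j. unfold nc_tail_term. change (plus ?a (opp ?b)) with (a - b). Req. ring.
    + apply (is_series_minus (V := R_NormedModule)); apply nc_tail_correct; lra.
Qed.

Lemma chi2_tail_mixture (m : nat) (mu lam : R) :
  0 <= mu -> 0 < lam -> chi2_tail (S m) mu lam = nc_tail m mu lam.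
Proof.
  intros Hmu Hlam. apply ImpInt_primitive; [|now apply nc_tail_vanishes].
  intros b Hb. now apply chi2_pdf_RInt.
Qed.

(** Gamma(m+1, y) = m! P_{m+1}(y): the Erlang tail is a Poisson distribution
    function (its derivative is -m! p_m = -t^m e^{-t}). *)
Lemma upper_gamma_poisson (m : nat) (y : R) :
  0 <= y -> upper_gamma (S m) y = INR (fact m) * poisson_cdf (S m) y.
Proof.
  intro Hy. unfold upper_gamma.
  apply (ImpInt_primitive _ (fun t => INR (fact m) * poisson_cdf (S m) t));
    [|apply vanishes_scal, poisson_cdf_vanishes].
  intros b Hb.
  apply (is_RInt_ext (fun t => INR (fact m) * poisson m t)).
  { intros t _. unfold poisson. replace (S m - 1)%nat with m by lia.
    Req. field. apply not_0_INR, fact_neq_0. }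
  replace (INR (fact m) * poisson_cdf (S m) y - INR (fact m) * poisson_cdf (S m) b)
    with (minus (opp (INR (fact m) * poisson_cdf (S m) b))
                (opp (INR (fact m) * poisson_cdf (S m) y)))
    by (change (minus (opp ?a) (opp ?b)) with (- a - - b); Req; ring).
  apply (is_RInt_derive (fun t => opp (INR (fact m) * poisson_cdf (S m) t))).
  - intros t _. replace (INR (fact m) * poisson m t)
      with (opp (scal (INR (fact m)) (- poisson m t)))
      by (change (opp (scal ?a ?b)) with (- (a * b)); Req; ring).
    apply (is_derive_opp (fun t => INR (fact m) * poisson_cdf (S m) t)).
    apply (is_derive_scal (poisson_cdf (S m))), poisson_cdf_derive.
  - intros t _. apply (ex_derive_continuous (V := R_NormedModule)).
    unfold poisson. auto_derive. auto.
Qed.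

Lemma regularized_gamma_central (m : nat) (x : R) :
  0 <= x -> upper_gamma (S m) (x / 2) / Gamma_fn (S m) = central_tail m x.
Proof.
  intro Hx. unfold Gamma_fn, central_tail.
  rewrite !upper_gamma_poisson, poisson_cdf_at_0 by lra.
  field. apply not_0_INR, fact_neq_0.
Qed.

Lemma marcum_integrand_chi2 (m : nat) (mu t : R) : 0 < mu -> 0 < t ->
  t ^ S m * exp (- (sqrt mu ^ 2 + t ^ 2) / 2) * besselI m (sqrt mu * t)
  = sqrt mu ^ m * (2 * t) * chi2_pdf (S m) mu (t ^ 2).
Proof.
  intros Hmu Ht. unfold chi2_pdf.
  destruct (Rle_dec (t ^ 2) 0) as [Ht0|_]; [nra|].
  destruct (Rlt_dec 0 mu) as [_|Hc]; [|lra]. replace (S m - 1)%nat with m by lia.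
  assert (Ha : 0 < sqrt mu) by now apply sqrt_lt_R0.
  rewrite sqrt_mult, sqrt_div, !sqrt_pow2 by (nra || lra).
  rewrite pow2_sqrt by lra. replace (t ^ 2 + mu) with (mu + t ^ 2) by ring.
  unfold Rdiv. rewrite Rpow_mult_distr, pow_inv, (Rmult_comm (sqrt mu) t).
  simpl pow. field. apply pow_nonzero. lra.
Qed.

(** Integral of the Marcum integrand over [sqrt lam, b], again by termwise
    integration of the Poisson mixture (after the substitution x = t^2). *)
Lemma marcum_integrand_RInt (m : nat) (mu lam b : R) : 0 < mu -> 0 < lam -> sqrt lam <= b ->
  is_RInt (fun t => t ^ S m * exp (- (sqrt mu ^ 2 + t ^ 2) / 2) * besselI m (sqrt mu * t))
    (sqrt lam) b
    (sqrt mu ^ m * nc_tail m mu (sqrt lam ^ 2) - sqrt mu ^ m * nc_tail m mu (b ^ 2)).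
Proof.
  intros Hmu Hlam Hb.
  assert (Hsl : 0 < sqrt lam) by now apply sqrt_lt_R0.
  assert (Ham : 0 < sqrt mu ^ m) by now apply pow_lt, sqrt_lt_R0.
  apply (is_RInt_series (fun j => sqrt mu ^ m * poisson j (mu / 2))
           (fun j t => 2 * t * central_pdf (m + j) (t ^ 2))
           (fun j t => - central_tail (m + j) (t ^ 2)) _ (sqrt lam) b b (sqrt mu ^ m * 1));
    try assumption.
  - intro j. pose proof (poisson_ge0 j (mu / 2) ltac:(lra)). nra.
  - exact (is_series_scal _ _ _ (poisson_series (mu / 2))).
  - intros j t _.
    replace (2 * t * central_pdf (m + j) (t ^ 2)) with (scal (2 * t) (central_pdf (m + j) (t ^ 2)))
      by reflexivity.
    apply (is_derive_comp (fun x => - central_tail (m + j) x) (fun t => t ^ 2));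
      [apply neg_central_tail_derive|auto_derive; auto; Req; ring].
  - intros j t _. apply (ex_derive_continuous (V := R_NormedModule)).
    unfold central_pdf, poisson. auto_derive. auto.
  - intros j t Ht. pose proof (central_pdf_bounds (m + j) (t ^ 2) ltac:(nra)).
    rewrite Rabs_pos_eq; nra.
  - intros t Ht. rewrite marcum_integrand_chi2 by lra.
    apply (is_series_ext (fun j => scal (sqrt mu ^ m * (2 * t))
                                        (poisson j (mu / 2) * central_pdf (m + j) (t ^ 2)))).
    + intro j. change (scal ?a ?b) with (a * b). Req. ring.
    + apply (is_series_scal (V := R_NormedModule)), chi2_pdf_mixture; nra.
  - apply (is_series_ext (fun j => scal (sqrt mu ^ m)
             (plus (nc_tail_term m mu (sqrt lam ^ 2) j) (opp (nc_tail_term m mu (b ^ 2) j))))).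
    + intro j. unfold nc_tail_term. change (scal ?u (plus ?v (opp ?w))) with (u * (v - w)).
      Req. ring.
    + replace (sqrt mu ^ m * nc_tail m mu (sqrt lam ^ 2) - sqrt mu ^ m * nc_tail m mu (b ^ 2))
        with (scal (sqrt mu ^ m) (plus (nc_tail m mu (sqrt lam ^ 2)) (opp (nc_tail m mu (b ^ 2)))))
        by (change (scal ?u (plus ?v (opp ?w))) with (u * (v - w)); Req; ring).
      apply (is_series_scal (V := R_NormedModule)), (is_series_minus (V := R_NormedModule));
        apply nc_tail_correct; nra.
Qed.

Lemma marcumQ_mixture (m : nat) (mu lam : R) :
  0 <= mu -> 0 < lam -> marcumQ (S m) (sqrt mu) (sqrt lam) = nc_tail m mu lam.
Proof.
  intros Hmu Hlam. unfold marcumQ.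
  destruct (Rle_lt_or_eq_dec 0 mu Hmu) as [Hmu0|<-].
  - assert (Ha : 0 < sqrt mu) by now apply sqrt_lt_R0.
    destruct (Rlt_dec 0 (sqrt mu)) as [_|Hc]; [|lra]. replace (S m - 1)%nat with m by lia.
    rewrite (ImpInt_primitive _ (fun t => sqrt mu ^ m * nc_tail m mu (t ^ 2))).
    + rewrite pow2_sqrt by lra. field. apply pow_nonzero. lra.
    + intros b Hb. now apply marcum_integrand_RInt.
    + apply vanishes_scal, (vanishes_comp (nc_tail m mu) (fun t => t ^ 2));
        [now apply nc_tail_vanishes|].
      intro B. exists (Rmax B 1). intros t Ht.
      pose proof (Rmax_l B 1). pose proof (Rmax_r B 1). nra.
  - rewrite sqrt_0. destruct (Rlt_dec 0 0) as [Hc|_]; [lra|].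
    rewrite pow2_sqrt, regularized_gamma_central, nc_tail_central by lra. reflexivity.
Qed.

Section Aliasing.
Local Open Scope nat_scope.

Lemma crt_unique (p q a b N : nat) :
  prime (Z.of_nat p) -> prime (Z.of_nat q) -> p <> q ->
  a mod p = b mod p -> a mod q = b mod q -> a < N -> b < N -> N < p * q -> a = b.
Proof.
  intros Hp Hq Hpq Hap Haq Ha Hb HN.
  assert (Hdiv : forall r, r <> 0 -> a mod r = b mod r ->
                        (Z.of_nat r | Z.of_nat a - Z.of_nat b)%Z).
  { intros r Hr Hab. exists (Z.of_nat (a / r) - Z.of_nat (b / r))%Z.
    pose proof (Nat.div_mod_eq a r). pose proof (Nat.div_mod_eq b r). nia. }
  assert (Hp0 : p <> 0) by (intro; subst; now apply not_prime_0).
  assert (Hq0 : q <> 0) by (intro; subst; now apply not_prime_0).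
  destruct (Hdiv q Hq0 Haq) as [t Ht].
  assert (Hrel : rel_prime (Z.of_nat p) (Z.of_nat q)).
  { apply prime_rel_prime; [exact Hp|]. intro Hd. apply Hpq, Nat2Z.inj.
    now apply prime_div_prime. }
  assert (Hpt : (Z.of_nat p | t)%Z).
  { apply (Gauss _ (Z.of_nat q)); [|exact Hrel].
    rewrite Z.mul_comm, <- Ht. now apply Hdiv. }
  destruct Hpt as [u Hu]. subst t.
  destruct (Z.eq_dec u 0) as [->|Hu0]; [lia|].
  exfalso. assert (Hle : (Z.of_nat p * Z.of_nat q <= Z.abs (Z.of_nat a - Z.of_nat b))%Z).
  { rewrite Ht, !Z.abs_mul, (Z.abs_eq (Z.of_nat p)), (Z.abs_eq (Z.of_nat q)) by lia.
    pose proof (Z.abs_pos u). nia. }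
  lia.
Qed.

Lemma consecutive_primes_increasing (v : nat) (M : nat -> nat) :
  consecutive_primes v M -> forall i j, i < j < v -> M i < M j.
Proof.
  intros [_ HM] i j Hij. induction j as [|j IH]; [lia|].
  replace (S j) with (j + 1) by lia.
  destruct (Nat.eq_dec i j) as [->|Hne]; [apply HM; lia|].
  assert (M i < M j) by (apply IH; lia). assert (M j < M (j + 1)) by (apply HM; lia). lia.
Qed.

(** The occupied bin onto which CR i folds the bin k (0 if there is none). *)
Definition alias_source (M : nat -> nat) (Omega : list nat) (k i : nat) : nat :=
  match find (fun k' => Nat.eqb (k mod M i) (k' mod M i)) Omega with
  | Some k' => k'
  | None => 0
  end.

Lemma Upsilon_spec (v : nat) (M : nat -> nat) (Omega : list nat) (k i : nat) :
  In i (Upsilon v M Omega k) ->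
  i < v /\ ~ In k Omega /\ In (alias_source M Omega k i) Omega /\
  k mod M i = alias_source M Omega k i mod M i.
Proof.
  unfold Upsilon, alias_source. intro Hi. apply filter_In in Hi.
  destruct Hi as [Hi Hcond]. apply in_seq in Hi. apply andb_prop in Hcond.
  destruct Hcond as [Hk Halias]. apply Bool.negb_true_iff in Hk.
  apply existsb_exists in Halias. destruct Halias as [k0 [Hk0 Hk0']].
  split; [lia|split].
  - intro Hin. assert (existsb (Nat.eqb k) Omega = true) by
      (apply existsb_exists; exists k; split; [exact Hin|apply Nat.eqb_refl]).
    congruence.
  - destruct (find _ Omega) as [k'|] eqn:Hf.
    + apply find_some in Hf. destruct Hf as [Hf1 Hf2]. apply Nat.eqb_eq in Hf2. tauto.
    + rewrite (find_none _ _ Hf k0 Hk0) in Hk0'. discriminate.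
Qed.

Lemma Upsilon_lt (v : nat) (M : nat -> nat) (Omega : list nat) (k i : nat) :
  In i (Upsilon v M Omega k) -> i < v.
Proof. intro Hi. exact (proj1 (Upsilon_spec v M Omega k i Hi)). Qed.

Lemma Upsilon_NoDup (v : nat) (M : nat -> nat) (Omega : list nat) (k : nat) :
  NoDup (Upsilon v M Omega k).
Proof. apply NoDup_filter, seq_NoDup. Qed.

(** Two distinct CRs never fold k onto the same occupied bin k': otherwise k
    and k' agree modulo two distinct primes whose product exceeds N, so k = k'
    would be occupied. *)
Lemma Upsilon_length (N v : nat) (M : nat -> nat) (Omega : list nat) (k : nat) :
  consecutive_primes v M ->
  (forall i j, i < v -> j < v -> i <> j -> N < M i * M j) ->
  (forall k', In k' Omega -> k' < N) -> k < N ->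
  length (Upsilon v M Omega k) <= length Omega.
Proof.
  intros HM HMM HOmega Hk.
  rewrite <- (length_map (alias_source M Omega k)). apply NoDup_incl_length.
  - apply NoDup_map_NoDup_ForallPairs; [|apply Upsilon_NoDup].
    intros i j Hi Hj Hsrc.
    destruct (Upsilon_spec v M Omega k i Hi) as [Hiv [Hk_free [Hio Him]]].
    destruct (Upsilon_spec v M Omega k j Hj) as [Hjv [_ [_ Hjm]]].
    destruct (Nat.eq_dec i j) as [|Hij]; [assumption|exfalso].
    assert (HMij : M i <> M j).
    { destruct (Nat.lt_total i j) as [Hl|[Hl|Hl]]; [| contradiction |].
      - pose proof (consecutive_primes_increasing v M HM i j ltac:(lia)). lia.
      - pose proof (consecutive_primes_increasing v M HM j i ltac:(lia)). lia. }
    apply Hk_free. replace k with (alias_source M Omega k i); [exact Hio|].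
    symmetry. apply (crt_unique (M i) (M j) k _ N); auto.
    + now apply (proj1 HM).
    + now apply (proj1 HM).
    + now rewrite Hsrc.
  - intros k' Hk'. apply in_map_iff in Hk'. destruct Hk' as [i [<- Hi]].
    apply (Upsilon_spec v M Omega k i Hi).
Qed.

End Aliasing.

Lemma sumR_app (f : nat -> R) (l1 l2 : list nat) : sumR f (l1 ++ l2) = sumR f l1 + sumR f l2.
Proof. induction l1 as [|a l1 IH]; simpl; [ring|]. rewrite IH. ring. Qed.

Lemma sumR_nonneg (f : nat -> R) (l : list nat) : (forall i, In i l -> 0 <= f i) -> 0 <= sumR f l.
Proof.
  induction l as [|a l IH]; simpl; intro Hf; [lra|].
  pose proof (Hf a (or_introl eq_refl)). pose proof (IH (fun i Hi => Hf i (or_intror Hi))). lra.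
Qed.

Lemma sumR_incl (f : nat -> R) (l1 l2 : list nat) :
  NoDup l1 -> incl l1 l2 -> (forall i, In i l2 -> 0 <= f i) -> sumR f l1 <= sumR f l2.
Proof.
  revert l2. induction l1 as [|a l1 IH]; intros l2 Hnd Hinc Hf; [now apply sumR_nonneg|].
  destruct (in_split a l2 (Hinc a (or_introl eq_refl))) as [x [y ->]].
  inversion Hnd as [|? ? Ha Hnd']; subst.
  assert (Hrest : sumR f l1 <= sumR f (x ++ y)).
  { apply IH; [exact Hnd'| |].
    - intros b Hb. destruct (in_app_or _ _ _ (Hinc b (or_intror Hb))) as [Hx|[<-|Hy]];
        [now apply in_or_app; left|contradiction|now apply in_or_app; right].
    - intros i Hi. apply Hf.
      destruct (in_app_or _ _ _ Hi); apply in_or_app; [now left|right; now right]. }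
  rewrite sumR_app in *. simpl. lra.
Qed.

Theorem theorem1
  (N J v s : nat) (M : nat -> nat) (gamma : nat -> nat -> R)
  (Omega : list nat) (k : nat) (lam : R)
  (HN : (0 < N)%nat) (HJ : (0 < J)%nat) (Hv : (0 < v)%nat)
  (HM : consecutive_primes v M)
  (HMM : forall i j, (i < v)%nat -> (j < v)%nat -> i <> j -> (N < M i * M j)%nat)
  (HOmega_nodup : NoDup Omega)
  (HOmega_range : forall k', In k' Omega -> (k' < N)%nat)
  (Hsparse : (length Omega <= s)%nat)
  (Hk : (k < N)%nat)
  (Hgamma : forall i, (i < v)%nat -> 0 <= gamma i k)
  (Hlam : 0 < lam) :
  let Ups_k := Upsilon v M Omega k in
  let Pf := chi2_tail (J * v) (2 / INR N * sumR (fun i => INR (M i) * gamma i k) Ups_k) lam in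
  (length Ups_k <= s)%nat /\
  (forall Ups : list nat,
     NoDup Ups -> (forall i, In i Ups -> (i < v)%nat) -> length Ups = s ->
     incl Ups_k Ups ->
     upper_gamma (J * v) (lam / 2) / Gamma_fn (J * v) <= Pf /\
     Pf <= marcumQ (J * v)
             (sqrt (2 / INR N * sumR (fun i => INR (M i) * gamma i k) Ups)) (sqrt lam)) /\
  (forall mu : R,
     2 / INR N * sumR (fun i => INR (M i) * gamma i k) (seq 0 v) <= mu ->
     marcumQ (J * v)
       (sqrt (2 / INR N * sumR (fun i => INR (M i) * gamma i k) (seq 0 v))) (sqrt lam)
     <= chi2_tail (J * v) mu lam).
Proof.
  intros Ups_k Pf. unfold Pf. clear Pf.
  (* 2Jv degrees of freedom: write Jv = m + 1. *)
  replace (J * v)%nat with (S (J * v - 1)) by nia. set (m := (J * v - 1)%nat).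
  set (F := fun i => INR (M i) * gamma i k).
  assert (Hncp : forall l, (forall i, In i l -> (i < v)%nat) -> 0 <= 2 / INR N * sumR F l).
  { intros l Hl. apply Rmult_le_pos; [apply Rdiv_le_0_compat; [lra|now apply lt_0_INR]|].
    apply sumR_nonneg. intros i Hi. apply Rmult_le_pos; [apply pos_INR|auto]. }
  assert (Hk0 : 0 <= 2 / INR N * sumR F Ups_k) by (apply Hncp; intros i; apply Upsilon_lt).
  split; [|split].
  -
    eapply Nat.le_trans; [|exact Hsparse]. now apply (Upsilon_length N).
  - (* All three quantities are mixture tails, with noncentralities
       0 <= ncp(Upsilon_k) <= ncp(Upsilon). *)
    intros Ups Hnd HUps Hlen Hincl.
    assert (HU0 : 0 <= 2 / INR N * sumR F Ups) by now apply Hncp.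
    rewrite chi2_tail_mixture, marcumQ_mixture, regularized_gamma_central,
      <- nc_tail_central by lra.
    split; apply nc_tail_mono; try lra; split; auto.
    apply Rmult_le_compat_l; [apply Rdiv_le_0_compat; [lra|now apply lt_0_INR]|].
    apply sumR_incl; [apply Upsilon_NoDup|exact Hincl|].
    intros i Hi. apply Rmult_le_pos; [apply pos_INR|auto].
  -
    intros mu Hmu.
    assert (Hall : 0 <= 2 / INR N * sumR F (seq 0 v))
      by (apply Hncp; intros i Hi; apply in_seq in Hi; lia).
    rewrite marcumQ_mixture, chi2_tail_mixture by (auto; lra).
    apply nc_tail_mono; lra.
Qed.
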